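(* Let $(p_i)_{i\ge1}$ be a sequence of integers $p_i\ge 2$ and let $H_k$ be the iterated wreath product $\wr_{i=1}^{k}C_{p_i}$, realized as below. Let $f_{k,k+1}:H_k\to H_{k+1}$ be the injective homomorphism extending an automorphism of the $k$-level tree to the $(k+1)$-level tree by trivial vertex permutations at level $k$. Then the direct limit $\varinjlim H_k$ of the direct system $(H_k,f_{k,k+1})$ has commutator width $1$.
   Context: Let $T_k$ be the rooted tree with levels $0,1,\dots,k$ in which every vertex at level $i-1$ has $p_i$ children labelled $1,\dots,p_i$. $H_k$ is the group of automorphisms of $T_k$ such that at every vertex of level $i-1$ ($1\le i\le k$) the induced permutation of its children is a power of the cycle $(1,2,\dots,p_i)$; this group is isomorphic to the iterated permutational wreath product of the cyclic groups $C_{p_1},\dots,C_{p_k}$. The commutator width $cw(G)$ is the maximum, over elements $g$ of the derived subgroup $G'$, of the least number of commutators whose product is $g$. *)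

From mathcomp Require Import all_boot all_order all_fingroup.
Set Implicit Arguments. Unset Strict Implicit. Unset Printing Implicit Defensive.

Local Open Scope group_scope.

(* Conventions: [p : nat -> nat] with [p i] = p_{i+1}, the number of children
   of every vertex at level i (levels counted from 0).  A leaf of T_k is a
   sequence (x_0, ..., x_{k-1}) with x_i < p i (child labels are 0..p i - 1
   instead of 1..p_{i+1}).  The vertices of T_k at level i are the prefixes
   of length i of leaves. *)

Section Tree.
Variable p : nat -> nat.

Definition leaf (k : nat) : finType := {dffun forall i : 'I_k, 'I_(p i)}.

Definition same_prefix k (i : 'I_k) (x y : leaf k) : bool :=
  [forall j : 'I_k, (j < i)%N ==> (x j == y j)].

Definition shift k (s : {perm leaf k}) (x : leaf k) (i : 'I_k) : nat :=
  ((s x i : nat) + (p i - x i)) %% p i.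

(* H_k : permutations of the leaves of T_k coming from tree automorphisms
   whose induced permutation of the children of every vertex of level i is a
   power of the cycle (0 1 ... p i - 1): all leaves below a common vertex of
   level i are rotated by the same amount at coordinate i.  (This condition
   also forces s to preserve the tree structure, and every leaf permutation
   induced by such an automorphism satisfies it.) *)
Definition inH k (s : {perm leaf k}) : bool :=
  [forall x, forall y, forall i : 'I_k,
     same_prefix i x y ==> (shift s x i == shift s y i)].

Definition restr k (x : leaf k.+1) : leaf k :=
  finfun (fun i : 'I_k => (x (widen_ord (leqnSn k) i) : 'I_(p i))).
Definition lastc k (x : leaf k.+1) : 'I_(p k) := x ord_max.

Definition fext k (s : {perm leaf k}) : {perm leaf k.+1} :=
  odflt 1 [pick t : {perm leaf k.+1} |
             [forall x, (restr (t x) == s (restr x)) && (lastc (t x) == lastc x)]].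

Fixpoint fiter (d k : nat) : {perm leaf k} -> {perm leaf (d + k)} :=
  match d with
  | 0 => fun s => s
  | d'.+1 => fun s => fext (fiter d' s)
  end.

(* Direct limit of (H_k, f_{k,k+1}), standard construction: a representative
   is a pair (k, s) with s in H_k; two representatives are identified when
   their images at a common level agree. *)
Definition rep : Type := {k : nat & {perm leaf k}}.

Definition in_lim (u : rep) : Prop := inH (tagged u).

(* image of the representative u at level m (meaningful for tag u <= m) *)
Definition lift_to (m : nat) (u : rep) : {perm leaf m} :=
  tagged_as (Tagged (fun n => {perm leaf n}) (1 : {perm leaf m}))
            (Tagged (fun n => {perm leaf n}) (fiter (m - tag u) (tagged u))).

Definition lvl (u v : rep) : nat := maxn (tag u) (tag v).

Definition lim_eq (u v : rep) : Prop := lift_to (lvl u v) u = lift_to (lvl u v) v.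
Definition lim_mul (u v : rep) : rep :=
  Tagged (fun n => {perm leaf n}) (lift_to (lvl u v) u * lift_to (lvl u v) v).
Definition lim_one : rep := Tagged (fun n => {perm leaf n}) (1 : {perm leaf 0}).
Definition lim_comm (u v : rep) : rep :=
  Tagged (fun n => {perm leaf n}) [~ lift_to (lvl u v) u, lift_to (lvl u v) v].

End Tree.

(* The derived subgroup G' consists of the finite
   products of commutators of elements of G (inverses of commutators are
   commutators).  [commutator_width_is ... n] says that the maximum over
   g in G' of the least number of commutators whose product is g equals n. *)
Section CW.
Variables (T : Type) (G : T -> Prop) (eqv : T -> T -> Prop)
          (mul : T -> T -> T) (one : T) (comm : T -> T -> T).

Definition prod_comms (s : seq (T * T)) : T :=
  foldr (fun a acc => mul (comm a.1 a.2) acc) one s.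

Definition is_prod_of_comms (g : T) (m : nat) : Prop :=
  exists s : seq (T * T), size s = m /\ foldr (fun a P => [/\ G a.1, G a.2 & P]) True s
                          /\ eqv g (prod_comms s).

Definition in_derived (g : T) : Prop := G g /\ exists m, is_prod_of_comms g m.

Definition commutator_width_is (n : nat) : Prop :=
  (forall g, in_derived g -> exists m, (m <= n)%N /\ is_prod_of_comms g m) /\
  (exists g, in_derived g /\ forall m, (m < n)%N -> ~ is_prod_of_comms g m).
End CW.

From mathcomp Require Import all_boot all_order all_fingroup.
From mathcomp Require Import zify.
Set Implicit Arguments. Unset Strict Implicit. Unset Printing Implicit Defensive.

(* The level sums of t in H_k (the total rotation t performs at level i, modulo p_i)
   form a homomorphism from H_k to an abelian group, compatible with the embeddings
   f_{k,k+1}.  So an element of the derived subgroup of the limit is represented at some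
   level k by a g in H_k all of whose level sums vanish.  If a is the odometer (adding
   machine) of T_k, then a g has the same level sums as a, and every such element of H_k
   is conjugate to a: by induction on k, conjugate the restriction to T_{k-1} onto the
   odometer; what is left at the last level is a coboundary equation along the single
   cycle of a on the leaves, solvable because the level sums agree.  Hence a g = a^b, that
   is g = [a, b].  As H_2 is not abelian, the width is not 0. *)

Section Coboundary.
Variables (T : finType) (sigma : T -> T) (rank : T -> nat) (N : nat) (z0 : T).
Hypotheses (rank_inj : injective rank) (rank_lt : forall y, rank y < N).
Hypotheses (rank_sigma : forall y, rank (sigma y) = (rank y).+1 %% N) (rank_z0 : rank z0 = 0).

Let Y j := iter j sigma z0.

Let rank_Y j : rank (Y j) = j %% N.
Proof.
elim: j => [|j IHj]; first by rewrite rank_z0 mod0n.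
by rewrite /Y iterS rank_sigma -/(Y j) IHj -addn1 modnDml addn1.
Qed.

Let Y_rank y : Y (rank y) = y.
Proof. by apply: rank_inj; rewrite rank_Y modn_small. Qed.

Let sum_cycle (F : T -> nat) : \sum_(j < N) F (Y j) = \sum_y F y.
Proof.
symmetry; apply: (reindex (fun j : 'I_N => Y j)); apply: onW_bij.
exists (fun y => Ordinal (rank_lt y)) => [j | y]; last exact: Y_rank.
by apply: val_inj; rewrite /= rank_Y modn_small.
Qed.

Lemma coboundary_on_cycle q (A C : T -> nat) : 0 < q ->
  \sum_y A y = \sum_y C y %[mod q] ->
  exists phi : T -> nat, forall y, phi y + C y = A y + phi (sigma y) %[mod q].
Proof.
case: q => // r _ sumAC.
(* As r = -1 (mod q), W y = C y - A y; phi is the partial sum of W along the cycle. *)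
pose W y := C y + r * A y.
have sumW : \sum_y W y = \sum_y C y + r * \sum_y A y by rewrite big_split -big_distrr.
exists (fun y => \sum_(j < rank y) W (Y j)) => y.
set S := \sum_(j < rank y) _.
have := rank_lt y; rewrite leq_eqVlt => /predU1P[last_y | lt_y].
  have -> : rank (sigma y) = 0 by rewrite rank_sigma last_y modnn.
  rewrite big_ord0 addn0 -(modnMDl (\sum_y A y) (A y)).
  have := sum_cycle W; rewrite -last_y big_ord_recr /= Y_rank sumW.
  move=> tot; apply/eqP; rewrite -(eqn_modDr (r * A y)).
  have -> : S + C y + r * A y = \sum_y C y + r * \sum_y A y by rewrite -addnA -tot.
  have -> : (\sum_y A y) * r.+1 + A y + r * A y = (\sum_y A y + A y) * r.+1 by nia.
  by rewrite modnMl -modnDml -sumAC modnDml -[_ + _]/(r.+1 * \sum_y A y) modnMr.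
have -> : rank (sigma y) = (rank y).+1 by rewrite rank_sigma modn_small.
rewrite big_ord_recr /= Y_rank -/S.
have -> : A y + (S + W y) = A y * r.+1 + (S + C y) by rewrite /W; lia.
by rewrite modnMDl.
Qed.

End Coboundary.

Section IteratedWreath.
Variable p : nat -> nat.
Hypothesis p_gt0 : forall i, 0 < p i.

Local Notation leaf := (leaf p).

(** * Coordinates of leaves *)

Definition coord k (x : leaf k) (n : nat) : nat :=
  if insub n is Some j then nat_of_ord (x j) else 0.

Lemma coordE k (x : leaf k) (j : 'I_k) : coord x j = x j.
Proof. by rewrite /coord valK. Qed.

Lemma coord_lt k (x : leaf k) n : coord x n < p n.
Proof. by rewrite /coord; case: insubP => [j _ <-|_]; [exact: ltn_ord | exact: p_gt0]. Qed.

Lemma leafP k (x y : leaf k) : (forall n, n < k -> coord x n = coord y n) -> x = y.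
Proof.
by move=> xy; apply/ffunP => i; apply/val_inj; rewrite /= -!coordE xy.
Qed.

Definition mkleaf k (f : nat -> nat) : leaf k :=
  [ffun i : 'I_k => Ordinal (ltn_pmod (f i) (p_gt0 i))].

Lemma coord_mkleaf k f n : n < k -> coord (mkleaf k f) n = f n %% p n.
Proof. by move=> ltnk; rewrite -[n]/(nat_of_ord (Ordinal ltnk)) coordE ffunE. Qed.

Lemma coord_restr k (x : leaf k.+1) n : n < k -> coord (restr x) n = coord x n.
Proof.
move=> ltnk; rewrite -[n]/(nat_of_ord (Ordinal ltnk)) coordE ffunE.
by rewrite -(coordE x (widen_ord (leqnSn k) (Ordinal ltnk))).
Qed.

Lemma coord_last k (x : leaf k.+1) : coord x k = lastc x.
Proof. by rewrite -[k]/(nat_of_ord (@ord_max k)) coordE. Qed.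

Definition child k (y : leaf k) (c : nat) : leaf k.+1 :=
  mkleaf k.+1 (fun n => if n < k then coord y n else c).

Lemma coord_child k (y : leaf k) c n : n < k -> coord (child y c) n = coord y n.
Proof. by move=> ltnk; rewrite coord_mkleaf ?ltnk ?modn_small ?coord_lt // ltnW. Qed.

Lemma coord_child_last k (y : leaf k) c : coord (child y c) k = c %% p k.
Proof. by rewrite coord_mkleaf // ltnn. Qed.

Lemma restr_child k (y : leaf k) c : restr (child y c) = y.
Proof. by apply: leafP => n ltnk; rewrite coord_restr // coord_child. Qed.

Lemma child_eta k (x : leaf k.+1) : child (restr x) (coord x k) = x.
Proof.
apply: leafP => n; rewrite ltnS leq_eqVlt => /predU1P[->|ltnk].
  by rewrite coord_child_last modn_small // coord_lt.
by rewrite coord_child // coord_restr.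
Qed.

Lemma child_mod k (y : leaf k) c : child y (c %% p k) = child y c.
Proof.
apply: leafP => n; rewrite ltnS leq_eqVlt => /predU1P[->|ltnk].
  by rewrite !coord_child_last modn_mod.
by rewrite !coord_child.
Qed.

Lemma child_inj k (y y' : leaf k) c c' :
  child y c = child y' c' -> y = y' /\ c = c' %[mod p k].
Proof.
move=> e; split; first by rewrite -(restr_child y c) e restr_child.
by rewrite -(coord_child_last y c) -(coord_child_last y' c') e.
Qed.

(** * The group H_k *)

Definition agree k (n : nat) (x y : leaf k) := forall j, j < n -> coord x j = coord y j.

Definition shiftn k (s : {perm leaf k}) (x : leaf k) n :=
  (coord (s x) n + (p n - coord x n)) %% p n.

Lemma inHP k (s : {perm leaf k}) :
  inH s <-> (forall x y n, n < k -> agree n x y -> shiftn s x n = shiftn s y n).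
Proof.
have shiftE x (i : 'I_k) : shift s x i = shiftn s x i by rewrite /shift /shiftn !coordE.
have prefixP (i : 'I_k) x y : reflect (agree i x y) (same_prefix i x y).
  apply: (iffP forallP) => [pre j ltji | ag j].
    have ltjk := ltn_trans ltji (ltn_ord i).
    have /implyP/(_ ltji)/eqP/(congr1 val) := pre (Ordinal ltjk).
    by rewrite -[j]/(nat_of_ord (Ordinal ltjk)) !coordE.
  by apply/implyP => /ag; rewrite !coordE => /val_inj ->.
split=> [/forallP sH x y n ltnk /(prefixP (Ordinal ltnk)) pre | sH].
  have /forallP/(_ (Ordinal ltnk))/implyP/(_ pre)/eqP := forallP (sH x) y.
  by rewrite !shiftE.
apply/forallP => x; apply/forallP => y; apply/forallP => i.
by apply/implyP => /prefixP pre; rewrite !shiftE (sH x y i).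
Qed.

Lemma coord_shift k (s : {perm leaf k}) x n :
  coord (s x) n = (coord x n + shiftn s x n) %% p n.
Proof.
have := coord_lt x n; have := coord_lt (s x) n.
rewrite /shiftn modnDmr => lt_sx lt_x.
by rewrite addnCA subnKC ?modnDr ?modn_small // ltnW.
Qed.

Lemma inH_agree k (s : {perm leaf k}) x y n :
  inH s -> n <= k -> agree n x y -> agree n (s x) (s y).
Proof.
move=> /inHP sH lenk ag j ltjn.
have ag_j : agree j x y by move=> i ltij; apply/ag/(ltn_trans ltij).
by rewrite !coord_shift (ag j ltjn) (sH x y j (leq_trans ltjn lenk) ag_j).
Qed.

Lemma inH_agree_inv k (s : {perm leaf k}) x y n :
  inH s -> n <= k -> agree n (s x) (s y) -> agree n x y.
Proof.
move=> /inHP sH lenk ag; elim: n lenk ag => [|n IHn] ltnk ag j //.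
have ag_n : agree n x y by apply: IHn (ltnW ltnk) _ => i ltin; apply/ag/ltnW.
rewrite ltnS leq_eqVlt => /predU1P[->|]; last exact: ag_n.
move: (ag n (ltnSn n)); rewrite !coord_shift (sH x y n ltnk ag_n).
by move/eqP; rewrite eqn_modDr !modn_small ?coord_lt // => /eqP.
Qed.

Lemma shiftnM k (s t : {perm leaf k}) x n :
  shiftn (s * t)%g x n = (shiftn s x n + shiftn t (s x) n) %% p n.
Proof.
have := coord_lt x n; have := coord_lt (s x) n; have := coord_lt (t (s x)) n.
rewrite /shiftn permM modnDm => lt_tsx lt_sx lt_x.
rewrite -(modnDr _ (p n)); congr (_ %% _); lia.
Qed.

Lemma shiftn1 k x n : shiftn (1 : {perm leaf k})%g x n = 0.
Proof. by rewrite /shiftn perm1 subnKC ?modnn // ltnW ?coord_lt. Qed.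

Lemma inH_group_set k : group_set [set s : {perm leaf k} | inH s].
Proof.
apply/group_setP; split=> [|s t]; rewrite !inE.
  by apply/inHP => x y n _ _; rewrite !shiftn1.
move=> /[dup] sH' /inHP sH /inHP tH; apply/inHP => x y n ltnk ag.
rewrite !shiftnM (sH x y n ltnk ag) (tH (s x) (s y) n ltnk) //.
exact: inH_agree sH' (ltnW ltnk) ag.
Qed.

Canonical H_group k := Group (inH_group_set k).

Lemma inHG k (s : {perm leaf k}) : (s \in H_group k) = inH s.
Proof. by rewrite inE. Qed.

Lemma inH1 n : inH (1 : {perm leaf n})%g.
Proof. by rewrite -inHG group1. Qed.

Lemma inHM n (u v : {perm leaf n}) : inH u -> inH v -> inH (u * v)%g.
Proof. by rewrite -!inHG; apply: groupM. Qed.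

Lemma inHV n (u : {perm leaf n}) : inH u -> inH u^-1%g.
Proof. by rewrite -!inHG groupV. Qed.

Lemma inHJ n (u v : {perm leaf n}) : inH u -> inH v -> inH (u ^ v)%g.
Proof. by rewrite -!inHG; apply: groupJ. Qed.

(** * The wreath decomposition of H_{k+1} *)

Definition permf (T : finType) (f : T -> T) : {perm T} :=
  odflt 1%g [pick t : {perm T} | [forall x, t x == f x]].

Lemma permfE (T : finType) (f : T -> T) : injective f -> permf f =1 f.
Proof.
rewrite /permf => f_inj; case: pickP => [t /forallP tf x | none]; first exact/eqP/tf.
by have /forallP[x] := negbT (none (perm f_inj)); rewrite permE eqxx.
Qed.

Section Wreath.
Variable k : nat.
Implicit Types (s : {perm leaf k}) (t : {perm leaf k.+1}) (phi : leaf k -> nat).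
Implicit Types (y : leaf k) (x : leaf k.+1).

Lemma restr_agree x x' : agree k x x' -> restr x = restr x'.
Proof. by move=> ag; apply: leafP => n ltnk; rewrite !coord_restr // ag. Qed.

Lemma agree_restr n x x' : n <= k -> agree n x x' -> agree n (restr x) (restr x').
Proof. by move=> lenk ag j ltjn; rewrite !coord_restr ?ag // (leq_trans ltjn). Qed.

Lemma agree_child n y y' c c' : n <= k -> agree n y y' -> agree n (child y c) (child y' c').
Proof. by move=> lenk ag j ltjn; rewrite !coord_child ?ag // (leq_trans ltjn). Qed.

Lemma wr_inj s phi : injective (fun x => child (s (restr x)) (coord x k + phi (restr x))).
Proof.
move=> x x' /child_inj[/perm_inj eq_r /eqP]; rewrite eq_r eqn_modDr.
rewrite !modn_small ?coord_lt // => /eqP eq_l.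
by rewrite -(child_eta x) -(child_eta x') eq_r eq_l.
Qed.

(* [wr s phi] is the element (s; phi) of H_{k+1} = H_k ⋉ (Z/p_k)^(leaves of T_k): it acts
   as s on the first k coordinates and rotates the children of the vertex y of level k by
   phi y.  [res t] and [top t] are the two components of t. *)
Definition wr s phi : {perm leaf k.+1} := perm (@wr_inj s phi).

Lemma wrE s phi x : wr s phi x = child (s (restr x)) (coord x k + phi (restr x)).
Proof. exact: permE. Qed.

Definition res t : {perm leaf k} := permf (fun y => restr (t (child y 0))).

Definition top t y : nat := shiftn t (child y 0) k.

Lemma shiftn_wr_last s phi x : shiftn (wr s phi) x k = phi (restr x) %% p k.
Proof.
have := coord_lt x k; rewrite /shiftn wrE coord_child_last modnDml => lt_x.
by rewrite addnAC subnKC ?modnDl // ltnW.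
Qed.

Lemma shiftn_wr s phi x n : n < k -> shiftn (wr s phi) x n = shiftn s (restr x) n.
Proof. by move=> ltnk; rewrite /shiftn wrE coord_child // !coord_restr. Qed.

Lemma res_wr s phi : res (wr s phi) = s.
Proof.
have wr_child y : restr (wr s phi (child y 0)) = s y by rewrite wrE !restr_child.
apply/permP => y; rewrite permfE ?wr_child // => y1 y2.
by rewrite !wr_child => /perm_inj.
Qed.

Lemma top_wr s phi y : top (wr s phi) y = phi y %% p k.
Proof. by rewrite /top shiftn_wr_last restr_child. Qed.

Lemma wr_in s phi : inH s -> inH (wr s phi).
Proof.
move=> /inHP sH; apply/inHP => x x' n; rewrite ltnS leq_eqVlt.
case/predU1P=> [-> /restr_agree eq_r | ltnk ag]; first by rewrite !shiftn_wr_last eq_r.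
by rewrite !shiftn_wr //; apply: sH ltnk (agree_restr (ltnW ltnk) ag).
Qed.

Lemma wrM s phi s' phi' :
  (wr s phi * wr s' phi')%g = wr (s * s')%g (fun y => phi y + phi' (s y)).
Proof.
apply/permP => x; rewrite permM !wrE restr_child coord_child_last permM.
by rewrite -child_mod modnDml child_mod addnA.
Qed.

Lemma eq_wr s phi psi : (forall y, phi y = psi y %[mod p k]) -> wr s phi = wr s psi.
Proof.
move=> eq_phi; apply/permP => x.
by rewrite !wrE -child_mod -modnDmr eq_phi modnDmr child_mod.
Qed.

Lemma wr1 : wr 1 (fun _ => 0) = 1%g.
Proof. by apply/permP => x; rewrite wrE !perm1 addn0 child_eta. Qed.

Lemma fextE s : fext s = wr s (fun _ => 0).
Proof.
rewrite /fext; case: pickP => [t /forallP tP | none].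
  apply/permP => x; have /andP[t_r t_l] := tP x.
  by rewrite wrE addn0 -[t x]child_eta (eqP t_r) coord_last (eqP t_l) -coord_last.
have /forallP[x] := negbT (none (wr s (fun _ => 0))).
rewrite wrE restr_child eqxx; apply/eqP/val_inj.
by rewrite /= -!coord_last coord_child_last addn0 modn_small ?coord_lt.
Qed.

Section InH.
Variable t : {perm leaf k.+1}.
Hypothesis tH : inH t.

Lemma resE y : res t y = restr (t (child y 0)).
Proof.
apply: permfE => y1 y2 eq_r; rewrite -(restr_child y1 0) -(restr_child y2 0).
apply: restr_agree; apply: (inH_agree_inv tH (leqnSn k)) => j ltjk.
by rewrite -!coord_restr // eq_r.
Qed.

Lemma res_restr x : restr (t x) = res t (restr x).
Proof.
rewrite resE; apply/restr_agree/(inH_agree tH (leqnSn k)) => j ltjk.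
by rewrite coord_child // coord_restr.
Qed.

Lemma top_restr x : shiftn t x k = top t (restr x).
Proof.
apply: (proj1 (inHP t) tH) => // j ltjk.
by rewrite coord_child // coord_restr.
Qed.

Lemma wr_eta : wr (res t) (top t) = t.
Proof.
apply/permP => x.
by rewrite wrE -res_restr -top_restr -child_mod -coord_shift child_eta.
Qed.

Lemma res_in : inH (res t).
Proof.
apply/inHP => y y' n ltnk ag; rewrite /shiftn !resE !coord_restr //.
rewrite -(coord_child y 0 ltnk) -(coord_child y' 0 ltnk).
by apply: (proj1 (inHP t) tH) (ltnW _) (agree_child _ _ (ltnW ltnk) ag).
Qed.

End InH.

Lemma resM t t' : inH t -> inH t' -> res (t * t')%g = (res t * res t')%g.
Proof. by move=> tH t'H; rewrite -{1}(wr_eta tH) -{1}(wr_eta t'H) wrM res_wr. Qed.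

Lemma topM t t' y :
  inH t -> inH t' -> top (t * t')%g y = (top t y + top t' (res t y)) %% p k.
Proof. by move=> tH t'H; rewrite -{1}(wr_eta tH) -{1}(wr_eta t'H) wrM top_wr. Qed.

Lemma res1 : res 1 = 1%g.
Proof. by rewrite -wr1 res_wr. Qed.

Lemma top1 y : top 1 y = 0.
Proof. by rewrite -wr1 top_wr mod0n. Qed.

Lemma resV t : inH t -> res t^-1 = (res t)^-1%g.
Proof.
by move=> tH; apply/eqP; rewrite eq_sym eq_invg_mul -resM ?inHV // mulgV res1.
Qed.

Lemma resJ t b : inH t -> inH b -> res (t ^ b) = (res t ^ res b)%g.
Proof. by move=> tH bH; rewrite conjgE !resM ?resV ?inHM ?inHV. Qed.

End Wreath.

(** * Level sums *)

(* [level_sum t i] is the sum modulo p i of the rotations performed by t at the vertices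
   of level i (0 when i >= k); t |-> level_sum t is the abelianization of H_k. *)
Fixpoint level_sum k : {perm leaf k} -> nat -> nat :=
  match k with
  | 0 => fun _ _ => 0
  | k'.+1 => fun t i =>
      if i == k' then (\sum_(y : leaf k') top t y) %% p k' else level_sum (res t) i
  end.

Lemma level_sum_out k (t : {perm leaf k}) i : k <= i -> level_sum t i = 0.
Proof.
elim: k t => [//|k IHk] t /= ltki.
by rewrite gtn_eqF // IHk // ltnW.
Qed.

Lemma level_sum_lt k (t : {perm leaf k}) i : level_sum t i < p i.
Proof.
elim: k t => [|k IHk] t /=; first exact: p_gt0.
by case: eqP => [->|_]; [rewrite ltn_mod | exact: IHk].
Qed.

Lemma level_sumM k (s t : {perm leaf k}) i : inH s -> inH t ->
  level_sum (s * t)%g i = (level_sum s i + level_sum t i) %% p i.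
Proof.
elim: k s t => [|k IHk] s t sH tH /=; first by rewrite mod0n.
case: eqP => [->|_]; last by rewrite resM // IHk ?res_in.
rewrite modnDm (eq_bigr _ (fun y _ => topM y sH tH)) modn_summ big_split /=.
by rewrite [X in _ = _ + X %[mod _]](reindex_inj (@perm_inj _ (res s))).
Qed.

Lemma level_sum1 k i : level_sum (1 : {perm leaf k})%g i = 0.
Proof.
elim: k => [//|k IHk] /=.
by rewrite res1 IHk big1 ?mod0n ?if_same // => y _; rewrite top1.
Qed.

Lemma level_sumC k (s t : {perm leaf k}) i : inH s -> inH t ->
  level_sum (s * t)%g i = level_sum (t * s)%g i.
Proof. by move=> sH tH; rewrite !level_sumM // addnC. Qed.

Lemma level_sumJ k (s b : {perm leaf k}) i : inH s -> inH b ->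
  level_sum (s ^ b)%g i = level_sum s i.
Proof.
move=> sH bH; rewrite conjgE level_sumM ?inHM ?inHV // level_sumC //.
by rewrite -level_sumM ?inHM ?inHV // mulKg.
Qed.

Lemma level_sumR k (s t : {perm leaf k}) i : inH s -> inH t ->
  level_sum [~ s, t]%g i = 0.
Proof.
move=> sH tH; rewrite commgEl level_sumM ?inHV ?inHJ //.
by rewrite level_sumJ // -level_sumM ?inHV // mulVg level_sum1.
Qed.

Lemma level_sum_fext k (s : {perm leaf k}) i : inH s -> level_sum (fext s) i = level_sum s i.
Proof.
move=> sH /=; rewrite fextE res_wr; case: eqP => [->|//].
by rewrite level_sum_out // big1 ?mod0n // => y _; rewrite top_wr mod0n.
Qed.

(** * The odometer *)

(* The odometer adds 1 to a leaf read as the mixed-radix number [rank x], whose least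
   significant digit is at level 0; [carry y] holds for the largest leaf y. *)
Fixpoint carry k : leaf k -> bool :=
  match k with
  | 0 => fun _ => true
  | k'.+1 => fun x => carry (restr x) && (coord x k' == (p k').-1)
  end.

Fixpoint odometer k : {perm leaf k} :=
  if k is k'.+1 then wr (odometer k') (@carry k') else 1%g.

Lemma odometer_in k : inH (odometer k).
Proof. by elim: k => [|k IHk]; [exact: inH1 | exact: wr_in]. Qed.

Fixpoint nleaves k := if k is k'.+1 then nleaves k' * p k' else 1.

Fixpoint rank k : leaf k -> nat :=
  match k with
  | 0 => fun _ => 0
  | k'.+1 => fun x => rank (restr x) + coord x k' * nleaves k'
  end.

Lemma nleaves_gt0 k : 0 < nleaves k.
Proof. by elim: k => [|k IHk] //=; rewrite muln_gt0 IHk p_gt0. Qed.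

Lemma rank_lt k (x : leaf k) : rank x < nleaves k.
Proof.
elim: k x => [|k IHk] x //=.
by have := IHk (restr x); have := coord_lt x k; nia.
Qed.

Lemma rank_inj k : injective (@rank k).
Proof.
elim: k => [|k IHk] x x' /=; first by move=> _; apply: leafP.
move=> eq_rank; have := rank_lt (restr x); have := rank_lt (restr x').
have N_gt0 := nleaves_gt0 k; move=> lt_x' lt_x.
have eq_l : coord x k = coord x' k.
  move/(congr1 (divn^~ (nleaves k))): eq_rank.
  by rewrite /= ![rank _ + _]addnC !divnMDl // !divn_small ?addn0.
have /IHk eq_r : rank (restr x) = rank (restr x') by move: eq_rank; rewrite eq_l => /addIn.
by rewrite -[x]child_eta -[x']child_eta eq_r eq_l.
Qed.

Lemma carry_rank k (y : leaf k) : carry y = ((rank y).+1 == nleaves k).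
Proof.
elim: k y => [|k IHk] y //=; rewrite IHk.
have := rank_lt (restr y); have := coord_lt y k; have := p_gt0 k.
move=> p_gt0k lt_l lt_r; apply/andP/eqP => [[/eqP e_r /eqP e_l] | e].
  by rewrite -e_r e_l; nia.
have e_l : coord y k = (p k).-1 by nia.
by rewrite e_l eqxx; split => //; apply/eqP; nia.
Qed.

Lemma rank_odometer k (x : leaf k) : rank (odometer k x) = (rank x).+1 %% nleaves k.
Proof.
elim: k x => [|k IHk] x /=; first by rewrite modn1.
rewrite wrE restr_child IHk coord_child_last carry_rank.
have := rank_lt (restr x); have := coord_lt x k; have := nleaves_gt0 k.
case: eqP => [last_r | ne_r] N_gt0 lt_l lt_r /=.
  rewrite last_r modnn add0n muln_modl [p k * _]mulnC; congr (_ %% _); lia.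
have lt_r1 : (rank (restr x)).+1 < nleaves k by rewrite ltn_neqAle lt_r andbT; apply/eqP.
by rewrite [coord x k + _]addn0 !modn_small //; nia.
Qed.

Lemma rank_zero k : rank (mkleaf k (fun _ => 0)) = 0.
Proof.
elim: k => [|k IHk] //=.
have -> : restr (mkleaf k.+1 (fun _ => 0)) = mkleaf k (fun _ => 0).
  by apply: leafP => n ltnk; rewrite coord_restr // !coord_mkleaf // ltnS ltnW.
by rewrite IHk coord_mkleaf // mod0n.
Qed.

Lemma wr_odometer_conj k (psi : leaf k -> nat) :
  \sum_y psi y = \sum_(y : leaf k) carry y %[mod p k] ->
  exists2 d, inH d & wr (odometer k) psi = (odometer k.+1 ^ d)%g.
Proof.
move=> sum_psi.
have [phi phiP] := coboundary_on_cycle (@rank_inj k) (@rank_lt k) (@rank_odometer k)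
  (rank_zero k) (p_gt0 k) (esym sum_psi).
exists (wr 1 phi); first exact/wr_in/inH1.
apply: (mulgI (wr 1 phi)); rewrite conjgE mulKVg /= !wrM mul1g mulg1.
by apply: eq_wr => y; rewrite perm1 phiP.
Qed.

Lemma conj_odometer k (c : {perm leaf k}) : inH c ->
  (forall i, level_sum c i = level_sum (odometer k) i) ->
  exists2 b, inH b & c = (odometer k ^ b)%g.
Proof.
elim: k c => [|k IHk] c cH sum_c.
  exists 1%g; first exact: inH1.
  by rewrite conjg1; apply/permP => x; apply: leafP.
have [b' b'H res_c] : exists2 b', inH b' & res c = (odometer k ^ b')%g.
  apply: IHk (res_in cH) _ => i.
  have [-> | ne_ik] := eqVneq i k; first by rewrite !level_sum_out.
  by have := sum_c i; rewrite /= (negbTE ne_ik) res_wr.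
(* Conjugating by B, the lift of b', reduces to the case res c = odometer k. *)
set B := fext b'; have BH : inH B by rewrite /B fextE; exact: wr_in.
set c' := (c ^ B^-1)%g; have c'H : inH c' by rewrite inHJ ?inHV.
have res_c' : res c' = odometer k.
  by rewrite resJ ?inHV // resV // /B fextE res_wr res_c conjgK.
have c'_wr : c' = wr (odometer k) (top c') by rewrite -res_c' wr_eta.
have sum_c' : \sum_y top c' y = \sum_(y : leaf k) carry y %[mod p k].
  have := sum_c k; rewrite -(level_sumJ k cH (inHV BH)) /= !eqxx -/c' => ->.
  by rewrite (eq_bigr _ (fun y _ => top_wr _ _ y)) modn_summ.
have [d dH c'_od] := wr_odometer_conj sum_c'.
exists (d * B)%g; first exact: inHM.
by rewrite conjgM -c'_od -c'_wr conjgKV.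
Qed.

Lemma level_sum0_commg k (g : {perm leaf k}) : inH g -> (forall i, level_sum g i = 0) ->
  exists a b, [/\ inH a, inH b & g = [~ a, b]%g].
Proof.
move=> gH sum_g; have odH := odometer_in k.
have [b bH od_g] : exists2 b, inH b & (odometer k * g = odometer k ^ b)%g.
  apply: conj_odometer => [|i]; first exact: inHM.
  by rewrite level_sumM // sum_g addn0 modn_small ?level_sum_lt.
by exists (odometer k), b; rewrite commgEl -od_g mulKg.
Qed.

(** * The direct limit *)

Lemma fiter_in d k (s : {perm leaf k}) : inH s -> inH (fiter d s).
Proof. by move=> sH; elim: d => [|d IHd] //=; rewrite fextE wr_in. Qed.

Lemma level_sum_fiter d k (s : {perm leaf k}) i :
  inH s -> level_sum (fiter d s) i = level_sum s i.
Proof.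
by move=> sH; elim: d => [|d IHd] //; rewrite -IHd; apply: level_sum_fext; apply: fiter_in.
Qed.

Lemma fiter1 d k : fiter d (1 : {perm leaf k})%g = 1%g.
Proof. by elim: d => [|d IHd] //=; rewrite IHd fextE wr1. Qed.

Local Notation lim_of s := (Tagged (fun n => {perm leaf n}) s).

Lemma lift_toP (Q : forall n, {perm leaf n} -> Prop) k m (s : {perm leaf k}) :
  k <= m -> (forall d, Q (d + k) (fiter d s)) -> Q m (lift_to m (lim_of s)).
Proof.
move=> lekm /(_ (m - k)); rewrite /lift_to /=.
move: (fiter (m - k) s) (subnK lekm); move: (m - k + k) => n t eq_nm; subst n.
by rewrite tagged_asE.
Qed.

Lemma lift_to_self k (s : {perm leaf k}) : lift_to k (lim_of s) = s.
Proof.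
by rewrite /lift_to /=; move: (k - k) (subnn k) => d eq_d0; subst d; rewrite tagged_asE.
Qed.

Lemma lift_to_one m : lift_to m (lim_one p) = 1%g.
Proof. by apply: (@lift_toP (fun n t => t = 1%g)) => // d; rewrite fiter1. Qed.

Section Limit.
Implicit Types (u v : rep p).

Lemma lift_to_in u m : in_lim u -> tag u <= m -> inH (lift_to m u).
Proof.
case: u => k s /= sH lekm.
by apply: (@lift_toP (fun n t => inH t)) => // d; apply: fiter_in.
Qed.

Lemma level_sum_lift_to u m i : in_lim u -> tag u <= m ->
  level_sum (lift_to m u) i = level_sum (tagged u) i.
Proof.
case: u => k s /= sH lekm.
by apply: (@lift_toP (fun n t => level_sum t i = _)) => // d; apply: level_sum_fiter.
Qed.

Lemma lim_mul_in u v : in_lim u -> in_lim v -> in_lim (lim_mul u v).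
Proof. by move=> uH vH; apply: inHM; apply: lift_to_in; rewrite ?leq_maxl ?leq_maxr. Qed.

Lemma level_sum_lim_mul u v i : in_lim u -> in_lim v ->
  level_sum (tagged (lim_mul u v)) i
    = (level_sum (tagged u) i + level_sum (tagged v) i) %% p i.
Proof.
move=> uH vH; rewrite /= level_sumM ?lift_to_in ?leq_maxl ?leq_maxr //.
by rewrite !level_sum_lift_to ?leq_maxl ?leq_maxr.
Qed.

Lemma lim_comm_in u v : in_lim u -> in_lim v -> in_lim (lim_comm u v).
Proof.
by move=> uH vH; rewrite /in_lim -inHG groupR // inHG lift_to_in ?leq_maxl ?leq_maxr.
Qed.

Lemma level_sum_lim_comm u v i : in_lim u -> in_lim v ->
  level_sum (tagged (lim_comm u v)) i = 0.
Proof. by move=> uH vH; rewrite level_sumR ?lift_to_in ?leq_maxl ?leq_maxr. Qed.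

Lemma level_sum_lim_eq u v i : in_lim u -> in_lim v -> lim_eq u v ->
  level_sum (tagged u) i = level_sum (tagged v) i.
Proof.
move=> uH vH eq_uv.
rewrite -(level_sum_lift_to i uH (leq_maxl _ (tag v))) eq_uv.
by rewrite level_sum_lift_to ?leq_maxr.
Qed.

Lemma prod_comms_level_sum (l : seq (rep p * rep p)) :
  foldr (fun a P => [/\ in_lim a.1, in_lim a.2 & P]) True l ->
  let P := prod_comms (@lim_mul p) (lim_one p) (@lim_comm p) l in
  in_lim P /\ forall i, level_sum (tagged P) i = 0.
Proof.
elim: l => [|[a b] l IHl] /=; first by split=> [|//]; apply: inH1.
case=> aH bH /IHl[PH sum_P]; have CH := lim_comm_in aH bH.
split=> [|i]; first exact: lim_mul_in.
by rewrite level_sum_lim_mul // level_sum_lim_comm // sum_P mod0n.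
Qed.

End Limit.

Lemma commg_prod_of_comms k (a b : {perm leaf k}) : inH a -> inH b ->
  is_prod_of_comms (@in_lim p) (@lim_eq p) (@lim_mul p) (lim_one p) (@lim_comm p)
    (lim_of [~ a, b]%g) 1.
Proof.
move=> aH bH; exists [:: (lim_of a, lim_of b)]; split=> //; split=> //=.
have -> : lim_comm (lim_of a) (lim_of b) = lim_of [~ a, b]%g.
  by rewrite /lim_comm /lvl /= maxnn !lift_to_self.
by rewrite /lim_mul /lvl /= maxn0 lift_to_self lift_to_one mulg1.
Qed.

Lemma odometer_commg_neq1 : 1 < p 0 -> 1 < p 1 ->
  exists2 b : {perm leaf 2}, inH b & [~ odometer 2, b]%g != 1%g.
Proof.
move=> p0_gt1 p1_gt1; pose b := wr 1 (fun y : leaf 1 => coord y 0 == 0).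
exists b; first exact/wr_in/inH1.
pose z := mkleaf 2 (fun _ => 0).
apply/negP => /commgP/(congr1 (fun s : {perm leaf 2} => coord (s z) 1)).
have z0 : coord (restr z) 0 = 0 by rewrite coord_restr // coord_mkleaf ?mod0n.
rewrite !permM /= !wrE !restr_child !coord_child_last coord_mkleaf // mod0n z0 perm1 z0.
by case: (p 0) p0_gt1 => [|[|n0]] //; case: (p 1) p1_gt1 => [|[|n1]].
Qed.

End IteratedWreath.

Theorem mainTheorem7 (p : nat -> nat) (hp : forall i, 2 <= p i) :
  commutator_width_is (@in_lim p) (@lim_eq p) (@lim_mul p) (@lim_one p)
                      (@lim_comm p) 1.
Proof.
have p_gt0 i : 0 < p i by apply: leq_trans (hp i).
split.
  move=> [k g] [gH [m [l [_ [lH eq_gl]]]]].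
  have [PH sum_P] := prod_comms_level_sum p_gt0 lH.
  have sum_g i : level_sum p_gt0 g i = 0.
    by rewrite (level_sum_lim_eq p_gt0 i gH PH eq_gl) sum_P.
  have [a [b [aH bH ->]]] := level_sum0_commg (g := g) gH sum_g.
  by exists 1; split => //; apply: commg_prod_of_comms.
have [b bH ne1] := odometer_commg_neq1 p_gt0 (hp 0) (hp 1).
have odH := odometer_in p_gt0 2.
exists (Tagged (fun n => {perm leaf p n}) [~ odometer p_gt0 2, b]%g); split.
  by split; [rewrite /in_lim -inHG groupR ?inHG | exists 1; apply: commg_prod_of_comms].
move=> m; rewrite ltnS leqn0 => /eqP -> [l [/size0nil -> [_]]].
rewrite /lim_eq /lvl /= lift_to_self (lift_to_one p_gt0) => eq1.
by rewrite eq1 eqxx in ne1.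
Qed.
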